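(* Let $f\neq 0$ and $\mu\in\mathbb{R}$. The curve $\left(x^2+y^2-\mu f x\right)^2=f^2(x^2+2y^2)$ (with the origin removed) is the image, under inversion with respect to the circle $x^2+y^2=f^2$, of the conic $$2y^2+(1-\mu^2)x^2+2\mu f x-f^2=0,$$ which has eccentricity $e=\sqrt{(\mu^2+1)/2}$, focal parameter $p=f/2$, and foci at the points $\left(\dfrac{f}{2(\mu\pm e)},0\right)$.
   Context: Inversion with respect to the circle $x^2+y^2=f^2$ maps a point $P\neq 0$ to $f^2P/|P|^2$. *)

From Stdlib Require Import Reals.
Open Scope R_scope.

Definition pt : Type := (R * R)%type.

Definition dist_pt (P Q : pt) : R :=
  sqrt ((fst P - fst Q) ^ 2 + (snd P - snd Q) ^ 2).

(* A line a x + b y + c = 0 (non-degeneracy (a,b) <> (0,0) is required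
   where lines are used). *)
Record line : Type := mkLine { la : R; lb : R; lc : R }.

Definition dist_line (P : pt) (L : line) : R :=
  Rabs (la L * fst P + lb L * snd P + lc L) / sqrt (la L ^ 2 + lb L ^ 2).

(* Inversion w.r.t. the circle x^2+y^2 = f^2 : P |-> f^2 P / |P|^2
   (only meaningful for P <> 0). *)
Definition inversion (f : R) (P : pt) : pt :=
  (f ^ 2 * fst P / (fst P ^ 2 + snd P ^ 2),
   f ^ 2 * snd P / (fst P ^ 2 + snd P ^ 2)).

(* K is the conic with focus F, directrix L and eccentricity e > 0:
   K = { P | dist(P,F) = e * dist(P,L) }.  Its focal parameter
   (semi-latus rectum) is then e * dist(F,L). *)
Definition is_focus_directrix (K : pt -> Prop) (F : pt) (L : line) (e : R) : Prop :=
  0 < e /\ (la L, lb L) <> (0, 0) /\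
  forall P : pt, K P <-> dist_pt P F = e * dist_line P L.

Definition conic_K (f mu : R) (P : pt) : Prop :=
  2 * snd P ^ 2 + (1 - mu ^ 2) * fst P ^ 2 + 2 * mu * f * fst P - f ^ 2 = 0.

Definition curve_C (f mu : R) (P : pt) : Prop :=
  P <> (0, 0) /\
  (fst P ^ 2 + snd P ^ 2 - mu * f * fst P) ^ 2 = f ^ 2 * (fst P ^ 2 + 2 * snd P ^ 2).

(* Inversion is an involution of the punctured plane, and clearing the denominator
   [|P|^4] turns the conic's equation at [inversion f P] into the curve's equation at [P].

   A focus-directrix description of the conic [K] amounts to a polynomial identity
   [(x - p)^2 + (y - q)^2 = (al x + be y + ga)^2] on [K] with [al^2 + be^2 = e^2].
   Since [K] is symmetric about the x-axis and has points above [x = 0, t, -t] for small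
   [t], comparing both sides along these vertical chords identifies all coefficients:
   [be = 0], [q = 0], [al^2 = (mu^2 + 1)/2], and [p] is a root of
   [((mu + e) p - f/2) ((mu - e) p - f/2)].  Conversely, for each such root an explicit
   vertical directrix works. *)

From Stdlib Require Import Reals Lra Psatz.
Open Scope R_scope.

Lemma pow2_gt_0 (x : R) : x <> 0 -> 0 < x ^ 2.
Proof. intros Hx; rewrite <- Rsqr_pow2; apply Rsqr_pos_lt, Hx. Qed.

Lemma sum_sq_pos (x y : R) : (x, y) <> (0, 0) -> 0 < x ^ 2 + y ^ 2.
Proof.
  intros Hxy; destruct (Req_dec x 0) as [-> | Hx].
  - destruct (Req_dec y 0) as [-> | Hy]; [congruence |].
    pose proof (pow2_gt_0 y Hy); lra.
  - pose proof (pow2_gt_0 x Hx); pose proof (pow2_ge_0 y); lra.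
Qed.

Lemma dist_pt_eq_Rabs (P F : pt) (t : R) :
  dist_pt P F = Rabs t <-> (fst P - fst F) ^ 2 + (snd P - snd F) ^ 2 = t ^ 2.
Proof.
  unfold dist_pt.
  assert (Hpos : 0 <= (fst P - fst F) ^ 2 + (snd P - snd F) ^ 2)
    by (apply Rplus_le_le_0_compat; apply pow2_ge_0).
  split; intros H.
  - rewrite <- (pow2_sqrt _ Hpos), H, pow2_abs; reflexivity.
  - rewrite H, <- Rsqr_pow2, sqrt_Rsqr_abs; reflexivity.
Qed.

Lemma Rmult_dist_line (e : R) (P : pt) (L : line) : 0 <= e ->
  let n := sqrt (la L ^ 2 + lb L ^ 2) in
  e * dist_line P L =
  Rabs (e * la L / n * fst P + e * lb L / n * snd P + e * lc L / n).
Proof.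
  intros He n; unfold dist_line; fold n.
  assert (Hn : 0 <= n) by apply sqrt_pos.
  replace (e * la L / n * fst P + e * lb L / n * snd P + e * lc L / n)
    with (e * (la L * fst P + lb L * snd P + lc L) * / n) by (unfold Rdiv; ring).
  unfold Rdiv; rewrite !Rabs_mult, Rabs_inv, (Rabs_pos_eq e He), (Rabs_pos_eq n Hn).
  ring.
Qed.

Lemma focus_directrix_sq (K : pt -> Prop) (p q : R) (L : line) (e : R) :
  is_focus_directrix K (p, q) L e ->
  exists al be ga : R,
    al ^ 2 + be ^ 2 = e ^ 2 /\
    e * dist_line (p, q) L = Rabs (al * p + be * q + ga) /\
    forall x y : R,
      K (x, y) <-> (x - p) ^ 2 + (y - q) ^ 2 = (al * x + be * y + ga) ^ 2.
Proof.
  destruct L as [a b c]; intros [He [Hab HK]]; cbn [la lb lc] in *.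
  set (n := sqrt (a ^ 2 + b ^ 2)).
  assert (Hn2 : n ^ 2 = a ^ 2 + b ^ 2)
    by (apply pow2_sqrt; pose proof (sum_sq_pos a b Hab); lra).
  assert (Hn : n <> 0) by (intros Hn; pose proof (sum_sq_pos a b Hab);
                           rewrite Hn in Hn2; lra).
  exists (e * a / n), (e * b / n), (e * c / n); split; [|split].
  - replace ((e * a / n) ^ 2 + (e * b / n) ^ 2) with (e ^ 2 * (a ^ 2 + b ^ 2) / n ^ 2)
      by (field; auto).
    rewrite Hn2; field; pose proof (sum_sq_pos a b Hab); lra.
  - exact (Rmult_dist_line e (p, q) (mkLine a b c) ltac:(lra)).
  - intros x y; rewrite HK, (Rmult_dist_line e (x, y) (mkLine a b c)) by lra.
    apply dist_pt_eq_Rabs.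
Qed.

Lemma dist_line_vertical (P : pt) (c : R) : dist_line P (mkLine 1 0 c) = Rabs (fst P + c).
Proof.
  unfold dist_line; cbn [la lb lc].
  replace (1 ^ 2 + 0 ^ 2) with 1 by ring; rewrite sqrt_1, Rdiv_1_r; f_equal; ring.
Qed.

Lemma is_focus_directrix_vertical (K : pt -> Prop) (p q d e : R) : 0 < e ->
  (forall x y : R, K (x, y) <-> (x - p) ^ 2 + (y - q) ^ 2 = (e * (x - d)) ^ 2) ->
  is_focus_directrix K (p, q) (mkLine 1 0 (- d)) e.
Proof.
  intros He HK; split; [exact He | split; [cbn; intros H; injection H; lra |]].
  intros [x y]; rewrite dist_line_vertical, <- (Rabs_pos_eq e) at 1 by lra.
  rewrite <- Rabs_mult, dist_pt_eq_Rabs, HK; cbn [fst snd].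
  replace (x + - d) with (x - d) by ring; reflexivity.
Qed.

Lemma inversion_involutive (f : R) (P : pt) :
  f <> 0 -> P <> (0, 0) -> inversion f (inversion f P) = P.
Proof.
  destruct P as [x y]; intros hf HP; pose proof (sum_sq_pos x y HP) as Hr.
  unfold inversion; cbn [fst snd].
  assert (Hnorm : (f ^ 2 * x / (x ^ 2 + y ^ 2)) ^ 2 + (f ^ 2 * y / (x ^ 2 + y ^ 2)) ^ 2
                  = f ^ 4 / (x ^ 2 + y ^ 2)) by (field; lra).
  rewrite Hnorm; f_equal; field; split; try lra; apply pow_nonzero; auto.
Qed.

Lemma inversion_neq0 (f : R) (P : pt) :
  f <> 0 -> P <> (0, 0) -> inversion f P <> (0, 0).
Proof.
  intros hf HP H0; apply HP.
  rewrite <- (inversion_involutive f P hf HP), H0.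
  unfold inversion; cbn [fst snd]; f_equal; unfold Rdiv; ring.
Qed.

(* The conic's equation at [inversion f P] is [- f^2 / |P|^4] times the curve's
   equation at [P]. *)
Lemma conic_K_inversion (f mu : R) (P : pt) : f <> 0 -> P <> (0, 0) ->
  conic_K f mu (inversion f P) <->
  (fst P ^ 2 + snd P ^ 2 - mu * f * fst P) ^ 2 = f ^ 2 * (fst P ^ 2 + 2 * snd P ^ 2).
Proof.
  destruct P as [x y]; intros hf HP; pose proof (sum_sq_pos x y HP) as Hr.
  unfold conic_K, inversion; cbn [fst snd].
  assert (Hf2 : f ^ 2 <> 0) by (apply pow_nonzero; auto).
  assert (Hr2 : (x ^ 2 + y ^ 2) ^ 2 <> 0) by (apply pow_nonzero; lra).
  match goal with |- ?lhs = 0 <-> _ =>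
    assert (Hscale : lhs * (x ^ 2 + y ^ 2) ^ 2 =
      - f ^ 2 * ((x ^ 2 + y ^ 2 - mu * f * x) ^ 2 - f ^ 2 * (x ^ 2 + 2 * y ^ 2)))
      by (field; lra)
  end.
  split; intros Hc.
  - rewrite Hc, Rmult_0_l in Hscale; symmetry in Hscale.
    apply Rmult_integral in Hscale as [Hz | Hz]; [exfalso; apply Hf2; lra | lra].
  - rewrite Hc, Rminus_diag, Rmult_0_r in Hscale.
    apply Rmult_integral in Hscale as [Hz | Hz]; [exact Hz | contradiction].
Qed.

Lemma curve_C_inversion (f mu : R) (P : pt) : f <> 0 ->
  curve_C f mu P <-> exists Q : pt, Q <> (0, 0) /\ conic_K f mu Q /\ inversion f Q = P.
Proof.
  intros hf; split.
  - intros [HP Hc]; exists (inversion f P); split; [|split].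
    + apply inversion_neq0; auto.
    + apply conic_K_inversion; auto.
    + apply inversion_involutive; auto.
  - intros [Q [HQ [HK <-]]]; split; [apply inversion_neq0; auto |].
    apply conic_K_inversion; [auto | apply inversion_neq0; auto |].
    rewrite inversion_involutive; auto.
Qed.

Definition conic_ysq (f mu x : R) : R := ((mu ^ 2 - 1) * x ^ 2 - 2 * mu * f * x + f ^ 2) / 2.

Lemma conic_K_ysq (f mu x y : R) : conic_K f mu (x, y) <-> y ^ 2 = conic_ysq f mu x.
Proof. unfold conic_K, conic_ysq; cbn [fst snd]; split; intros; lra. Qed.

(* [conic_ysq f mu x = ((f - mu x)^2 - x^2) / 2] is positive for small [|x|]. *)
Lemma conic_ysq_pos_pm (f mu : R) : f <> 0 ->
  exists t : R, t <> 0 /\ 0 < conic_ysq f mu t /\ 0 < conic_ysq f mu (- t).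
Proof.
  intros hf; set (d := / (4 * (mu ^ 2 + 1))).
  assert (Hd : 0 < d) by (apply Rinv_0_lt_compat; nra).
  assert (Hd1 : 4 * (mu ^ 2 + 1) * d = 1) by (unfold d; field; nra).
  assert (Hf2 : 0 < f ^ 2) by (apply pow2_gt_0; auto).
  assert (Hsmall : forall s : R, s = 1 \/ s = -1 -> 0 < (1 - s * mu * d) ^ 2 - d ^ 2).
  { intros s Hs.
    assert (Hd4 : d <= 1 / 4)
      by (pose proof (Rmult_le_pos d (mu ^ 2) ltac:(lra) (pow2_ge_0 mu)); lra).
    pose proof (Rmult_le_pos d ((mu - 1) ^ 2) ltac:(lra) (pow2_ge_0 _)).
    pose proof (Rmult_le_pos d ((mu + 1) ^ 2) ltac:(lra) (pow2_ge_0 _)).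
    assert (Hmud : - (1 / 8) <= s * mu * d <= 1 / 8)
      by (destruct Hs as [-> | ->]; split; nra).
    nra. }
  exists (d * f); split; [apply Rmult_integral_contrapositive_currified; lra |].
  unfold conic_ysq; split.
  - replace ((mu ^ 2 - 1) * (d * f) ^ 2 - 2 * mu * f * (d * f) + f ^ 2)
      with (f ^ 2 * ((1 - 1 * mu * d) ^ 2 - d ^ 2)) by ring.
    pose proof (Hsmall 1 (or_introl eq_refl)); nra.
  - replace ((mu ^ 2 - 1) * (- (d * f)) ^ 2 - 2 * mu * f * (- (d * f)) + f ^ 2)
      with (f ^ 2 * ((1 - -1 * mu * d) ^ 2 - d ^ 2)) by ring.
    pose proof (Hsmall (-1) (or_intror eq_refl)); nra.
Qed.

Lemma even_odd_parts (A B C y : R) : y <> 0 ->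
  A * y ^ 2 + B * y + C = 0 -> A * y ^ 2 - B * y + C = 0 -> B = 0 /\ A * y ^ 2 + C = 0.
Proof.
  intros Hy Hplus Hminus.
  assert (HB : B * y = 0) by lra.
  apply Rmult_integral in HB as [HB | HB]; [lra | contradiction].
Qed.

Section FocusDirectrixOfConic.

Variables f mu p q al be ga : R.
Hypothesis hf : f <> 0.
Hypothesis conic_sq : forall x y : R,
  conic_K f mu (x, y) -> (x - p) ^ 2 + (y - q) ^ 2 = (al * x + be * y + ga) ^ 2.

(* The conic is symmetric about the x-axis: compare the identity at [(x, y)] and [(x, -y)]. *)
Lemma vertical_chord_eqs (x : R) : 0 < conic_ysq f mu x ->
  q + be * (al * x + ga) = 0 /\
  (1 - be ^ 2) * conic_ysq f mu x + (x - p) ^ 2 + q ^ 2 - (al * x + ga) ^ 2 = 0.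
Proof.
  intros Hpos; set (y := sqrt (conic_ysq f mu x)).
  assert (Hy : 0 < y) by (apply sqrt_lt_R0; exact Hpos).
  assert (Hy2 : y ^ 2 = conic_ysq f mu x) by (apply pow2_sqrt; lra).
  assert (Hup := conic_sq x y (proj2 (conic_K_ysq f mu x y) Hy2)).
  assert (Hdown : conic_K f mu (x, - y))
    by (apply conic_K_ysq; rewrite <- Hy2; ring).
  apply conic_sq in Hdown.
  destruct (even_odd_parts (1 - be ^ 2) (- 2 * (q + be * (al * x + ga)))
              ((x - p) ^ 2 + q ^ 2 - (al * x + ga) ^ 2) y ltac:(lra))
    as [Hodd Heven]; [lra | lra |].
  split; [lra | rewrite <- Hy2; lra].
Qed.

Lemma directrix_coeff_eqs :
  be * al = 0 /\ q + be * ga = 0 /\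
  1 - al ^ 2 + (1 - be ^ 2) * (mu ^ 2 - 1) / 2 = 0 /\
  2 * p + 2 * al * ga + (1 - be ^ 2) * mu * f = 0 /\
  p ^ 2 + q ^ 2 - ga ^ 2 + (1 - be ^ 2) * f ^ 2 / 2 = 0.
Proof.
  set (A := 1 - al ^ 2 + (1 - be ^ 2) * (mu ^ 2 - 1) / 2).
  set (B := - (2 * p + 2 * al * ga + (1 - be ^ 2) * mu * f)).
  set (C := p ^ 2 + q ^ 2 - ga ^ 2 + (1 - be ^ 2) * f ^ 2 / 2).
  assert (Hquad : forall x : R,
    (1 - be ^ 2) * conic_ysq f mu x + (x - p) ^ 2 + q ^ 2 - (al * x + ga) ^ 2
    = A * x ^ 2 + B * x + C) by (intros x; unfold A, B, C, conic_ysq; field).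
  destruct (conic_ysq_pos_pm f mu hf) as [t [Ht [Hpos Hneg]]].
  assert (H0 : 0 < conic_ysq f mu 0)
    by (replace (conic_ysq f mu 0) with (f ^ 2 / 2) by (unfold conic_ysq; field);
        pose proof (pow2_gt_0 f hf); lra).
  destruct (vertical_chord_eqs 0 H0) as [Hl0 Hq0].
  destruct (vertical_chord_eqs t Hpos) as [Hlt Hqt].
  destruct (vertical_chord_eqs (- t) Hneg) as [_ Hqmt].
  rewrite Hquad in Hq0, Hqt, Hqmt.
  assert (HC : C = 0) by (rewrite <- Hq0; ring).
  destruct (even_odd_parts A B C t Ht) as [HB HA]; [lra | rewrite <- Hqmt; ring |].
  assert (HAt : A * t ^ 2 = 0) by lra.
  apply Rmult_integral in HAt as [HA0 | Ht0]; [| exfalso; apply Ht; nra].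
  assert (Hba : be * al * t = 0) by lra.
  apply Rmult_integral in Hba as [Hba | Ht0]; [| contradiction].
  unfold A, B, C in *; repeat split; lra.
Qed.

(* Otherwise [al = 0], and the remaining equations force both [1 < mu^2] and
   [f^2/2 + (mu^2 - 1) ga^2 = 0]. *)
Lemma directrix_be0 : be = 0.
Proof.
  destruct directrix_coeff_eqs as [Hba [Hq [HA [HB HC]]]].
  destruct (Req_dec be 0) as [| Hbe]; [assumption | exfalso].
  assert (Hal : al = 0) by (apply Rmult_integral in Hba as [|]; [contradiction | auto]).
  rewrite Hal in HA, HB; set (k := be ^ 2 - 1).
  assert (Hk : k * (mu ^ 2 - 1) = 2) by (unfold k; lra).
  assert (Hk0 : k <> 0) by (intros Hk0; rewrite Hk0 in Hk; lra).
  assert (Hkge : -1 <= k) by (unfold k; nra).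
  assert (Hmu : 1 < mu ^ 2) by nra.
  assert (Hp : p = k * mu * f / 2) by (unfold k; lra).
  assert (Hq2 : q ^ 2 = (k + 1) * ga ^ 2) by (replace q with (- be * ga) by lra; unfold k; ring).
  assert (Hfac : k * (k * mu ^ 2 * f ^ 2 / 4 + ga ^ 2 - f ^ 2 / 2) = 0)
    by (rewrite <- HC, Hq2, Hp; unfold k; field).
  apply Rmult_integral in Hfac as [| Hfac]; [contradiction |].
  assert (Hsum : f ^ 2 / 2 + (mu ^ 2 - 1) * ga ^ 2 = 0).
  { replace (f ^ 2 / 2 + (mu ^ 2 - 1) * ga ^ 2) with
      ((mu ^ 2 - 1) * (k * mu ^ 2 * f ^ 2 / 4 + ga ^ 2 - f ^ 2 / 2)
       - k * (mu ^ 2 - 1) * mu ^ 2 * f ^ 2 / 4 + mu ^ 2 * f ^ 2 / 2) by field.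
    rewrite Hfac, Hk; field. }
  pose proof (pow2_gt_0 f hf); nra.
Qed.

Lemma focus_ordinate : q = 0.
Proof.
  destruct directrix_coeff_eqs as [_ [Hq _]]; rewrite directrix_be0 in Hq; lra.
Qed.

Variable e : R.
Hypothesis he : 0 < e.
Hypothesis he2 : e ^ 2 = (mu ^ 2 + 1) / 2.

Lemma directrix_al_sq : al ^ 2 = e ^ 2.
Proof.
  destruct directrix_coeff_eqs as [_ [_ [HA _]]]; rewrite directrix_be0 in HA; lra.
Qed.

Lemma focus_abscissa : exists s : R, (s = 1 \/ s = -1) /\ (mu + s * e) * p = f / 2.
Proof.
  destruct directrix_coeff_eqs as [_ [_ [_ [HB HC]]]].
  rewrite directrix_be0 in HB, HC; rewrite focus_ordinate in HC.
  assert (Hprod : ((mu + e) * p - f / 2) * ((mu - e) * p - f / 2) = 0).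
  { assert (Hag : al * ga = - p - mu * f / 2) by lra.
    assert (Hsq : al ^ 2 * (p ^ 2 - ga ^ 2 + f ^ 2 / 2) = 0)
      by (replace (p ^ 2 - ga ^ 2 + f ^ 2 / 2) with 0 by lra; ring).
    replace (al ^ 2 * (p ^ 2 - ga ^ 2 + f ^ 2 / 2))
      with (al ^ 2 * p ^ 2 - (al * ga) ^ 2 + al ^ 2 * f ^ 2 / 2) in Hsq by field.
    rewrite Hag, directrix_al_sq, he2 in Hsq.
    replace (((mu + e) * p - f / 2) * ((mu - e) * p - f / 2))
      with ((mu ^ 2 - e ^ 2) * p ^ 2 - mu * f * p + f ^ 2 / 4) by field.
    rewrite he2; lra. }
  apply Rmult_integral in Hprod as [Hs | Hs];
    [exists 1 | exists (-1)]; split; auto; lra.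
Qed.

Lemma focal_parameter_coeffs : Rabs (al * p + be * q + ga) = Rabs f / 2.
Proof.
  destruct directrix_coeff_eqs as [_ [_ [_ [HB _]]]].
  rewrite directrix_be0 in HB |- *.
  destruct focus_abscissa as [s [Hs Hp]].
  assert (Hscaled : al * (al * p + 0 * q + ga) = - s * e * (f / 2)).
  { replace (al * (al * p + 0 * q + ga)) with (al ^ 2 * p + al * ga) by ring.
    replace (al * ga) with (- p - mu * f / 2) by lra.
    rewrite directrix_al_sq; replace f with (2 * ((mu + s * e) * p)) by lra.
    assert (He2p : p * e ^ 2 = p * ((mu ^ 2 + 1) / 2)) by (rewrite he2; reflexivity).
    destruct Hs as [-> | ->]; nra. }
  assert (Hsq : (al * p + 0 * q + ga) ^ 2 = (f / 2) ^ 2).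
  { apply (Rmult_eq_reg_l (e ^ 2)); [| apply pow_nonzero; lra].
    rewrite <- directrix_al_sq at 1.
    replace (al ^ 2 * (al * p + 0 * q + ga) ^ 2) with ((al * (al * p + 0 * q + ga)) ^ 2)
      by ring.
    rewrite Hscaled; destruct Hs as [-> | ->]; ring. }
  rewrite <- !Rsqr_pow2 in Hsq; apply Rsqr_eq_abs_0 in Hsq; rewrite Hsq.
  unfold Rdiv; rewrite Rabs_mult, Rabs_inv, (Rabs_pos_eq 2) by lra; reflexivity.
Qed.

End FocusDirectrixOfConic.

(* With [m = mu + s e] and [W = 2 e + s mu] one has [e W = 1 + mu m] and [W^2 = 1 + 2 m^2],
   which is what makes the directrix [e x = a W] work for the focus [a = f / (2 m)]. *)
Lemma conic_K_focus_directrix (f mu e s x y : R) :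
  0 < e -> e ^ 2 = (mu ^ 2 + 1) / 2 -> (s = 1 \/ s = -1) -> mu + s * e <> 0 ->
  let a := f / (2 * (mu + s * e)) in
  conic_K f mu (x, y) <->
  (x - a) ^ 2 + (y - 0) ^ 2 = (e * (x - a * (2 * e + s * mu) / e)) ^ 2.
Proof.
  intros He He2 Hs Hm a.
  assert (HeW : e * (2 * e + s * mu) = 1 + mu * (mu + s * e))
    by (destruct Hs as [-> | ->]; nra).
  assert (HW2 : (2 * e + s * mu) ^ 2 = 1 + 2 * (mu + s * e) ^ 2)
    by (destruct Hs as [-> | ->]; nra).
  set (m := mu + s * e) in *; set (W := 2 * e + s * mu) in *.
  assert (Hf : f = 2 * a * m) by (unfold a; field; exact Hm).
  replace (e * (x - a * W / e)) with (e * x - a * W) by (field; lra).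
  assert (Hexpand : 2 * ((x - a) ^ 2 + (y - 0) ^ 2 - (e * x - a * W) ^ 2) =
    2 * y ^ 2 + (1 - mu ^ 2) * x ^ 2 + 2 * mu * f * x - f ^ 2).
  { replace (2 * ((x - a) ^ 2 + (y - 0) ^ 2 - (e * x - a * W) ^ 2)) with
      (2 * y ^ 2 + (2 - 2 * e ^ 2) * x ^ 2 + 4 * a * (e * W - 1) * x + 2 * a ^ 2 * (1 - W ^ 2))
      by ring.
    rewrite HW2, HeW, He2, Hf; field. }
  unfold conic_K; cbn [fst snd]; rewrite <- Hexpand; split; intros; lra.
Qed.

Lemma focus_directrix_exists (f mu e s : R) :
  0 < e -> e ^ 2 = (mu ^ 2 + 1) / 2 -> (s = 1 \/ s = -1) -> mu + s * e <> 0 ->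
  exists L : line,
    is_focus_directrix (conic_K f mu) (f / (2 * (mu + s * e)), 0) L e /\
    e * dist_line (f / (2 * (mu + s * e)), 0) L = Rabs f / 2.
Proof.
  intros He He2 Hs Hm; set (a := f / (2 * (mu + s * e))).
  exists (mkLine 1 0 (- (a * (2 * e + s * mu) / e))); split.
  - apply is_focus_directrix_vertical; [exact He |].
    intros x y; apply conic_K_focus_directrix; assumption.
  - rewrite dist_line_vertical, <- (Rabs_pos_eq e) at 1 by lra; rewrite <- Rabs_mult.
    cbn [fst]; replace (e * (a + - (a * (2 * e + s * mu) / e))) with (- s * (f / 2)).
    + assert (Habs_s : Rabs s = 1)
        by (destruct Hs as [-> | ->]; [apply Rabs_R1 | rewrite Rabs_left; lra]).
      rewrite Rabs_mult, Rabs_Ropp, Habs_s, Rmult_1_l.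
      unfold Rdiv; rewrite Rabs_mult, Rabs_inv, (Rabs_pos_eq 2) by lra; reflexivity.
    + unfold a; destruct Hs as [-> | ->]; field; repeat split; (assumption || lra).
Qed.

Lemma focus_directrix_unique (f mu e : R) (F : pt) (L : line) (e' : R) :
  f <> 0 -> 0 < e -> e ^ 2 = (mu ^ 2 + 1) / 2 ->
  is_focus_directrix (conic_K f mu) F L e' ->
  e' = e /\ e' * dist_line F L = Rabs f / 2 /\
  exists s : R, (s = 1 \/ s = -1) /\ mu + s * e <> 0 /\ F = (f / (2 * (mu + s * e)), 0).
Proof.
  destruct F as [p q]; intros hf He He2 Hfd.
  assert (He' : 0 < e') by apply Hfd.
  destruct (focus_directrix_sq _ _ _ _ _ Hfd) as [al [be [ga [Hnorm [Hpar Hsq]]]]].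
  assert (Hconic : forall x y : R, conic_K f mu (x, y) ->
    (x - p) ^ 2 + (y - q) ^ 2 = (al * x + be * y + ga) ^ 2) by (intros x y; apply Hsq).
  assert (Hbe := directrix_be0 f mu p q al be ga hf Hconic).
  assert (Hq := focus_ordinate f mu p q al be ga hf Hconic).
  assert (Hal := directrix_al_sq f mu p q al be ga hf Hconic e He2).
  split; [| split].
  - apply Rsqr_inj; [lra | lra |]; rewrite !Rsqr_pow2; rewrite Hbe in Hnorm; lra.
  - rewrite Hpar; exact (focal_parameter_coeffs f mu p q al be ga hf Hconic e He He2).
  - destruct (focus_abscissa f mu p q al be ga hf Hconic e He2) as [s [Hs Hp]].
    assert (Hm : mu + s * e <> 0) by (intros Hm; rewrite Hm in Hp; lra).
    exists s; split; [exact Hs | split; [exact Hm |]].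
    rewrite Hq; f_equal; field_simplify_eq; [lra | exact Hm].
Qed.

Theorem mainTheorem2 (f mu : R) (hf : f <> 0) :
  let e := sqrt ((mu ^ 2 + 1) / 2) in
  (forall P : pt, curve_C f mu P <->
     exists Q : pt, Q <> (0, 0) /\ conic_K f mu Q /\ inversion f Q = P) /\
  (forall s : R, (s = 1 \/ s = -1) -> mu + s * e <> 0 ->
     exists L : line,
       is_focus_directrix (conic_K f mu) (f / (2 * (mu + s * e)), 0) L e /\
       e * dist_line (f / (2 * (mu + s * e)), 0) L = Rabs f / 2) /\
  (forall (F : pt) (L : line) (e' : R),
     is_focus_directrix (conic_K f mu) F L e' ->
     e' = e /\ e' * dist_line F L = Rabs f / 2 /\
     exists s : R, (s = 1 \/ s = -1) /\ mu + s * e <> 0 /\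
       F = (f / (2 * (mu + s * e)), 0)).
Proof.
  intros e.
  assert (Hk : 0 < (mu ^ 2 + 1) / 2) by (pose proof (pow2_ge_0 mu); lra).
  assert (He : 0 < e) by (apply sqrt_lt_R0; exact Hk).
  assert (He2 : e ^ 2 = (mu ^ 2 + 1) / 2) by (apply pow2_sqrt; lra).
  split; [| split].
  - intros P; apply curve_C_inversion, hf.
  - intros s Hs Hm; apply focus_directrix_exists; assumption.
  - intros F L e' Hfd; apply (focus_directrix_unique f mu e F L e'); assumption.
Qed.
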